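(* Let $H$ be an almost-breakable monoid. If $H$ is twisted or bridged, then $\mathcal{P}_{\mathrm{fin},1}(H)$ is not UmF.
   Context: A monoid $H$ is almost-breakable if for all $x,y\in H$, $xy\in\{x,y\}$ or $yx\in\{x,y\}$. An ordered pair $(x,y)\in H\times H$ is balanced if $xy\in\{x,y\}$, unbalanced otherwise. $H$ is twisted if there exist unbalanced pairs $(x,y)$ and $(z,w)$ with $\{x,y\}\cap\{z,w\}=\emptyset$, $xy\in\{z,w\}$ and $zw\in\{x,y\}$. $H$ is bridged if there exist $x_1,x_2,x_3\in H$ such that $(x_1,x_2)$, $(x_2,x_3)$, $(x_1,x_3)$ are unbalanced pairs and $x_1x_3\notin\{x_1x_2,x_2x_3\}$. $\mathcal{P}_{\mathrm{fin},1}(H)$ denotes the set of non-empty finite subsets of $H$ containing $1_H$, a monoid under $XY=\{xy:x\in X,y\in Y\}$. In a monoid $M$: $x\mid_M y$ iff $y\in MxM$; $x,y$ are associated if each divides the other; proper divisor means divides but not associated. A unit-divisor divides $1_M$; otherwise it is a non-unit-divisor. An irreducible is a non-unit-divisor $a$ with $a\neq xy$ for all non-unit-divisors $x,y$ properly dividing $a$. A factorization of $x$ is a finite word over the irreducibles with product $x$. For words $\mathfrak a,\mathfrak b$, $\mathfrak a\sqsubseteq\mathfrak b$ means $\mathfrak a$ is, up to associatedness of letters, a subword (subsequence) of some permutation of $\mathfrak b$; equivalence means $\sqsubseteq$ both ways. A factorization $\mathfrak a$ of $x$ is minimal if no factorization $\mathfrak b$ of $x$ satisfies $\mathfrak b\sqsubseteq\mathfrak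 a\not\sqsubseteq\mathfrak b$. $M$ is UmF if every non-unit-divisor has a factorization and any two minimal factorizations of an element are equivalent. *)

From Stdlib Require Import List Permutation.
Import ListNotations.
Set Implicit Arguments.

Record Monoid := {
  mcar :> Type;
  mmul : mcar -> mcar -> mcar;
  mone : mcar;
  massoc : forall x y z, mmul x (mmul y z) = mmul (mmul x y) z;
  mone_l : forall x, mmul mone x = x;
  mone_r : forall x, mmul x mone = x }.

Section HNotions.
Variable H : Monoid.
Local Notation "x * y" := (mmul H x y).

Definition balanced (x y : H) : Prop := x * y = x \/ x * y = y.
Definition unbalanced (x y : H) : Prop := ~ balanced x y.

Definition almost_breakable : Prop :=
  forall x y : H, balanced x y \/ balanced y x.

Definition twisted : Prop :=
  exists x y z w : H,
    unbalanced x y /\ unbalanced z w /\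
    (x <> z /\ x <> w /\ y <> z /\ y <> w) /\
    (x * y = z \/ x * y = w) /\ (z * w = x \/ z * w = y).

Definition bridged : Prop :=
  exists x1 x2 x3 : H,
    unbalanced x1 x2 /\ unbalanced x2 x3 /\ unbalanced x1 x3 /\
    x1 * x3 <> x1 * x2 /\ x1 * x3 <> x2 * x3.

Definition finite_subset (X : H -> Prop) : Prop :=
  exists s : list H, forall x, X x <-> In x s.

Definition Pfin1 : Type :=
  { X : H -> Prop | finite_subset X /\ X (mone H) }.

Definition set_mul (X Y : H -> Prop) : H -> Prop :=
  fun z => exists x y, X x /\ Y y /\ z = x * y.

Lemma set_mul_finite X Y : finite_subset X -> finite_subset Y ->
  finite_subset (set_mul X Y).
Proof.
  intros [s Hs] [t Ht].
  exists (flat_map (fun x => map (fun y => x * y) t) s).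
  intro z; rewrite in_flat_map; split.
  - intros (x & y & Hx & Hy & ->). exists x; split; [now apply Hs|].
    apply in_map_iff; exists y; split; [reflexivity| now apply Ht].
  - intros (x & Hx & Hz). apply in_map_iff in Hz as (y & <- & Hy).
    exists x, y; repeat split; [now apply Hs | now apply Ht].
Qed.

Lemma set_mul_one X Y : X (mone H) -> Y (mone H) -> set_mul X Y (mone H).
Proof. intros HX HY; exists (mone H), (mone H); repeat split; auto.
  now rewrite mone_l. Qed.

Definition Pfin1_mul (X Y : Pfin1) : Pfin1 :=
  exist _ (set_mul (proj1_sig X) (proj1_sig Y))
    (conj (@set_mul_finite _ _ (proj1 (proj2_sig X)) (proj1 (proj2_sig Y)))
          (@set_mul_one _ _ (proj2 (proj2_sig X)) (proj2 (proj2_sig Y)))).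

Definition Pfin1_one : Pfin1.
Proof.
  exists (fun x => x = mone H). split.
  - exists [mone H]. intro x; simpl; split; [intros ->; now left | now intros [->|[]]].
  - reflexivity.
Defined.

End HNotions.

Section Fact.
Variables (M : Type) (mul : M -> M -> M) (one : M).

Definition mdivides (x y : M) : Prop := exists a b, y = mul (mul a x) b.
Definition massociated (x y : M) : Prop := mdivides x y /\ mdivides y x.
Definition proper_divisor (x y : M) : Prop := mdivides x y /\ ~ mdivides y x.
Definition unit_divisor (x : M) : Prop := mdivides x one.

Definition irreducible (a : M) : Prop :=
  ~ unit_divisor a /\
  forall x y, ~ unit_divisor x -> ~ unit_divisor y ->
    proper_divisor x a -> proper_divisor y a -> a <> mul x y.

Definition word_prod (w : list M) : M := fold_right mul one w.

Definition factorization (w : list M) (x : M) : Prop :=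
  Forall irreducible w /\ word_prod w = x.

Inductive sublist {A : Type} : list A -> list A -> Prop :=
| sl_nil : sublist [] []
| sl_keep x l1 l2 : sublist l1 l2 -> sublist (x :: l1) (x :: l2)
| sl_skip x l1 l2 : sublist l1 l2 -> sublist l1 (x :: l2).

Definition subword (a b : list M) : Prop :=
  exists p s, Permutation b p /\ sublist s p /\ Forall2 massociated a s.

Definition word_equiv (a b : list M) : Prop := subword a b /\ subword b a.

Definition minimal_factorization (a : list M) (x : M) : Prop :=
  factorization a x /\
  ~ (exists b, factorization b x /\ subword b a /\ ~ subword a b).

Definition UmF : Prop :=
  (forall x, ~ unit_divisor x -> exists a, factorization a x) /\
  (forall x a b, minimal_factorization a x -> minimal_factorization b x ->
     word_equiv a b).

End Fact.

From Stdlib Require Import List Permutation Arith Lia.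
From Stdlib Require Import Classical FunctionalExtensionality PropExtensionality ProofIrrelevance.
Import ListNotations.
Set Implicit Arguments.

(* For u <> 1 the set {1, u} is an atom of P_fin,1(H), and the product of the
   atoms {1, u_1}, ..., {1, u_n} is the set of subproducts of the word
   u_1 ... u_n.  Divisibility in P_fin,1(H) is inclusion, so associated
   elements are equal and the order on words is inclusion of multisets.  It
   therefore suffices to find two words of equal length spelling the same set
   T, the first one minimal and not a rearrangement of the second.
   If H is twisted, say with xy = z and zw = x, then T = {1, x, y, z, w} is
   spelled by two three-letter words such as xyw and yzw, while two letters
   have at most four subproducts.  If H is bridged by (a, b, c), then
   T = {1, a, b, c, ab, bc} is spelled by bcab and by bca(ab); a shorter
   spelling must use each of a, b, c, as each lies outside the submonoid
   generated by the other two, and every ordering of a, b, c either produces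
   ac, which is not in T, or misses ab or bc. *)

Section Submultiset.
Context {A : Type}.
Implicit Types a b l s : list A.

Lemma sublist_length s l : sublist s l -> length s <= length l.
Proof. induction 1; simpl; lia. Qed.

Lemma sublist_length_eq s l : sublist s l -> length s = length l -> s = l.
Proof.
  induction 1 as [|x s l Hs IH|x s l Hs _]; simpl; intros E; auto.
  - f_equal; auto.
  - apply sublist_length in Hs; lia.
Qed.

Lemma sublist_refl l : sublist l l.
Proof. induction l; constructor; auto. Qed.

Lemma sublist_app_r s r : sublist s (s ++ r).
Proof.
  induction s as [|x s IH]; simpl.
  - induction r; constructor; auto.
  - constructor; exact IH.
Qed.

Lemma sublist_trans a b l : sublist a b -> sublist b l -> sublist a l.
Proof.
  intros Hab Hbl; revert a Hab.
  induction Hbl; intros a Hab; [exact Hab| |apply sl_skip; auto].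
  inversion Hab; subst; [constructor | apply sl_skip]; auto.
Qed.

Lemma sublist_incl s l : sublist s l -> incl s l.
Proof. induction 1; intros z Hz; simpl in *; intuition. Qed.

Lemma sublist_Permutation s l l' : sublist s l -> Permutation l l' ->
  exists s', sublist s' l' /\ Permutation s s'.
Proof.
  intros Hs Hp; revert s Hs.
  induction Hp as [|x l l' _ IH|x y l|l l' l'' _ IH1 _ IH2]; intros s Hs.
  - exists s; auto.
  - inversion Hs as [|? s0 ? Hs0|? ? ? Hs0]; subst;
      destruct (IH _ Hs0) as (s' & Hs' & Hp').
    + exists (x :: s'); split; constructor; auto.
    + exists s'; split; [apply sl_skip|]; auto.
  - inversion Hs as [|? s0 ? Hs0|? ? ? Hs0]; subst;
      inversion Hs0 as [|? s1 ? Hs1|? ? ? Hs1]; subst.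
    + exists (x :: y :: s1); split; [do 2 constructor | apply perm_swap]; auto.
    + exists (y :: s0); split; [apply sl_skip; constructor|]; auto.
    + exists (x :: s1); split; [constructor; apply sl_skip|]; auto.
    + exists s; split; [do 2 apply sl_skip|]; auto.
  - destruct (IH1 _ Hs) as (s1 & Hs1 & Hp1).
    destruct (IH2 _ Hs1) as (s2 & Hs2 & Hp2).
    exists s2; split; [|eapply perm_trans]; eauto.
Qed.

Lemma sublist_Permutation_app s l : sublist s l -> exists r, Permutation l (s ++ r).
Proof.
  induction 1 as [|x s l _ [r Hr]|x s l _ [r Hr]].
  - exists []; auto.
  - exists r; simpl; auto.
  - exists (x :: r). eapply perm_trans; [apply perm_skip, Hr|apply Permutation_middle].
Qed.

Definition submultiset a b : Prop := exists s, sublist s b /\ Permutation a s.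

Lemma submultiset_refl a : submultiset a a.
Proof. exists a; auto using sublist_refl. Qed.

Lemma Permutation_submultiset a b : Permutation a b -> submultiset a b.
Proof. exists b; auto using sublist_refl. Qed.

Lemma submultiset_trans a b l : submultiset a b -> submultiset b l -> submultiset a l.
Proof.
  intros (s & Hs & Has) (t & Ht & Hbt).
  destruct (sublist_Permutation Hs Hbt) as (s' & Hs' & Hss').
  exists s'; split; [eapply sublist_trans|eapply perm_trans]; eauto.
Qed.

Lemma submultiset_length a b : submultiset a b -> length a <= length b.
Proof.
  intros (s & Hs & Has).
  rewrite (Permutation_length Has); exact (sublist_length Hs).
Qed.

Lemma submultiset_length_eq a b : submultiset a b -> length a = length b -> Permutation a b.
Proof.
  intros (s & Hs & Has) E.
  rewrite (Permutation_length Has) in E.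
  rewrite <- (sublist_length_eq Hs E); exact Has.
Qed.

Lemma submultiset_strict a b : submultiset a b -> ~ submultiset b a -> length a < length b.
Proof.
  intros Hab Hba.
  destruct (Nat.eq_dec (length a) (length b)) as [E|E].
  - exfalso; apply Hba, Permutation_submultiset, Permutation_sym.
    exact (submultiset_length_eq Hab E).
  - pose proof (submultiset_length Hab); lia.
Qed.

Lemma submultiset_incl a b : submultiset a b -> incl a b.
Proof.
  intros (s & Hs & Has) z Hz.
  apply (sublist_incl Hs); eapply Permutation_in; eauto.
Qed.

Lemma Permutation_length_3_inv (x y z : A) l : Permutation [x; y; z] l ->
  l = [x; y; z] \/ l = [x; z; y] \/ l = [y; x; z] \/
  l = [y; z; x] \/ l = [z; x; y] \/ l = [z; y; x].
Proof.
  intros Hp.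
  destruct l as [|u [|v [|t [|]]]]; try (apply Permutation_length in Hp; discriminate).
  assert (Hx : In x [u; v; t]) by (apply (Permutation_in _ Hp); now left).
  destruct Hx as [<-|[<-|[<-|[]]]].
  - apply Permutation_cons_inv, Permutation_length_2_inv in Hp.
    destruct Hp as [E|E]; injection E as -> ->; auto.
  - apply (@Permutation_cons_app_inv _ _ [u] [t] v), Permutation_length_2_inv in Hp.
    destruct Hp as [E|E]; injection E as -> ->; auto 6.
  - apply (@Permutation_cons_app_inv _ _ [u; v] [] t), Permutation_length_2_inv in Hp.
    destruct Hp as [E|E]; injection E as -> ->; auto 7.
Qed.

End Submultiset.

Lemma incl_map_inv A B (f : A -> B) (d : list B) (l : list A) :
  incl d (map f l) -> exists l', d = map f l' /\ incl l' l.
Proof.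
  induction d as [|y d IH]; intros Hd.
  - exists []; split; [reflexivity | intros ? []].
  - apply incl_cons_inv in Hd as [Hy Hd].
    destruct (IH Hd) as (l' & -> & Hl').
    apply in_map_iff in Hy as (x & <- & Hx).
    exists (x :: l'); split; [reflexivity | now apply incl_cons].
Qed.

Section Subproducts.
Variable H : Monoid.
Local Notation "x * y" := (mmul H x y).
Local Notation one := (mone H).

Fixpoint subprods (us : list H) : list H :=
  match us with
  | [] => [one]
  | u :: us' => subprods us' ++ map (fun v => u * v) (subprods us')
  end.

Definition subprods_are (us T : list H) : Prop :=
  forall z, In z (subprods us) <-> In z T.

Definition mul_closed (S : list H) : Prop :=
  forall x y, In x S -> In y S -> In (x * y) S.

Lemma length_subprods us : length (subprods us) = 2 ^ length us.
Proof.
  induction us as [|u us IH]; simpl; auto.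
  rewrite length_app, length_map, IH; lia.
Qed.

Lemma subprods_are_length vs T : NoDup T -> subprods_are vs T -> length T <= 2 ^ length vs.
Proof.
  intros HT Hvs; rewrite <- length_subprods.
  apply NoDup_incl_length; [exact HT | intros z; apply Hvs].
Qed.

Lemma subprods_incl_closed S us : mul_closed S -> In one S -> incl us S -> incl (subprods us) S.
Proof.
  intros HS H1 Hus; induction us as [|u us IH]; simpl; intros z Hz.
  - destruct Hz as [<-|[]]; exact H1.
  - apply incl_cons_inv in Hus as [Hu Hus].
    apply in_app_iff in Hz as [Hz|(v & <- & Hv)%in_map_iff]; [now apply IH|].
    apply HS; [exact Hu | now apply IH].
Qed.

Lemma subprods_are_letter S vs T u : mul_closed S -> In one S ->
  subprods_are vs T -> In u T -> ~ In u S -> incl vs (u :: S) -> In u vs.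
Proof.
  intros HS H1 Hvs HuT HuS Hsub.
  apply NNPP; intro Hu; apply HuS.
  apply (subprods_incl_closed (us := vs) HS H1); [|now apply Hvs].
  intros v Hv; destruct (Hsub v Hv) as [->|]; tauto.
Qed.

End Subproducts.

Arguments subprods {H}.
Arguments subprods_are {H}.
Arguments mul_closed {H}.

Section Pfin1.
Variable H : Monoid.
Local Notation one := (mone H).
Local Notation P := (Pfin1 H).
Local Notation pmul := (@Pfin1_mul H).
Local Notation pone := (Pfin1_one H).

Definition carrier (X : P) : H -> Prop := proj1_sig X.

Lemma Pfin1_ext (X Y : P) : (forall z, carrier X z <-> carrier Y z) -> X = Y.
Proof.
  destruct X as [X HX], Y as [Y HY]; unfold carrier; simpl; intros E.
  assert (X = Y) as <-.
  { apply functional_extensionality; intro z; apply propositional_extensionality; auto. }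
  f_equal; apply proof_irrelevance.
Qed.

Lemma carrier_has_one X : carrier X one.
Proof. exact (proj2 (proj2_sig X)). Qed.

Lemma Pfin1_mul1 X : pmul pone X = X.
Proof.
  apply Pfin1_ext; intro z; split.
  - intros (x & y & -> & Hy & ->); rewrite mone_l; exact Hy.
  - intros Hz; exists one, z; repeat split; auto; now rewrite mone_l.
Qed.

Lemma Pfin1_mulr1 X : pmul X pone = X.
Proof.
  apply Pfin1_ext; intro z; split.
  - intros (x & y & Hx & -> & ->); rewrite mone_r; exact Hx.
  - intros Hz; exists z, one; repeat split; auto; now rewrite mone_r.
Qed.

Lemma mdivides_carrier X Y : mdivides pmul X Y -> forall z, carrier X z -> carrier Y z.
Proof.
  intros (A & B & ->) z Hz.
  exists z, one; split; [|split; [apply carrier_has_one | now rewrite mone_r]].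
  exists one, z; split; [apply carrier_has_one | split; [exact Hz | now rewrite mone_l]].
Qed.

Lemma mdivides_refl X : mdivides pmul X X.
Proof. exists pone, pone; now rewrite Pfin1_mul1, Pfin1_mulr1. Qed.

Lemma massociated_eq X Y : massociated pmul X Y <-> X = Y.
Proof.
  split.
  - intros [HXY HYX]; apply Pfin1_ext; split; [apply (mdivides_carrier HXY) | apply (mdivides_carrier HYX)].
  - intros <-; split; apply mdivides_refl.
Qed.

Lemma Forall2_massociated_eq a s : Forall2 (massociated pmul) a s <-> a = s.
Proof.
  split.
  - induction 1; f_equal; auto; now apply massociated_eq.
  - intros <-; induction a; constructor; auto; now apply massociated_eq.
Qed.

Lemma subword_submultiset a b : subword pmul a b <-> submultiset a b.
Proof.
  split.
  - intros (p & s & Hbp & Hsp & Has%Forall2_massociated_eq); subst s.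
    destruct (sublist_Permutation Hsp (Permutation_sym Hbp)) as (s' & Hs' & Has').
    exists s'; auto.
  - intros (s & Hsb & Has).
    destruct (sublist_Permutation_app Hsb) as [r Hr].
    exists (a ++ r), a; split; [|split; [apply sublist_app_r | now apply Forall2_massociated_eq]].
    eapply perm_trans; [exact Hr | apply Permutation_app_tail, Permutation_sym, Has].
Qed.

Definition pair1 (u : H) : P.
Proof.
  exists (fun z => z = one \/ z = u); split.
  - exists [one; u]; intro z; simpl; intuition.
  - now left.
Defined.

Lemma pair1_inj u v : u <> one -> pair1 u = pair1 v -> u = v.
Proof.
  intros Hu E.
  assert (Huv : carrier (pair1 v) u) by (rewrite <- E; now right).
  destruct Huv; tauto.
Qed.

(* A proper divisor of [{1, u}] is a subset of it containing [1] other than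
   [{1, u}] itself, hence [{1}]. *)
Lemma pair1_irreducible u : u <> one -> irreducible pmul pone (pair1 u).
Proof.
  intros Hu; split.
  - intros Hd; apply Hu; apply (mdivides_carrier Hd); now right.
  - intros Y Z HY _ [HYd HYn] _ _.
    destruct (classic (carrier Y u)) as [Yu|Yu].
    + apply HYn; replace Y with (pair1 u); [apply mdivides_refl|].
      apply Pfin1_ext; intro z; split.
      * intros [-> | ->]; auto using carrier_has_one.
      * apply (mdivides_carrier HYd).
    + apply HY; replace Y with pone; [apply mdivides_refl|].
      apply Pfin1_ext; intro z; split.
      * intros ->; apply carrier_has_one.
      * intros Hz; destruct (mdivides_carrier HYd _ Hz) as [E|E]; [exact E | subst; tauto].
Qed.

Lemma carrier_word_prod_pair1 us z :
  carrier (word_prod pmul pone (map pair1 us)) z <-> In z (subprods us).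
Proof.
  revert z; induction us as [|u us IH]; intro z; simpl.
  - split; [intros ->|intros [<-|[]]]; auto.
  - rewrite in_app_iff, in_map_iff; split.
    + intros (x & y & [-> | ->] & Hy & ->); apply IH in Hy.
      * left; now rewrite mone_l.
      * right; exists y; auto.
    + intros [Hz | (y & <- & Hy)].
      * exists one, z; rewrite mone_l; repeat split; auto; now apply IH.
      * exists u, y; repeat split; auto; now apply IH.
Qed.

Lemma word_prod_pair1_eq us vs :
  (forall z, In z (subprods us) <-> In z (subprods vs)) ->
  word_prod pmul pone (map pair1 us) = word_prod pmul pone (map pair1 vs).
Proof.
  intros E; apply Pfin1_ext; intro z; now rewrite !carrier_word_prod_pair1.
Qed.

Lemma factorization_pair1 us : Forall (fun u => u <> one) us ->
  factorization pmul pone (map pair1 us) (word_prod pmul pone (map pair1 us)).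
Proof.
  intros Hus; split; [|reflexivity].
  apply Forall_map; eapply Forall_impl; [apply pair1_irreducible | exact Hus].
Qed.

Lemma minimal_factorization_intro a X : factorization pmul pone a X ->
  (forall b, factorization pmul pone b X -> submultiset b a -> length b < length a -> False) ->
  minimal_factorization pmul pone a X.
Proof.
  intros Ha Hshort; split; [exact Ha|].
  intros (b & Hb & Hba%subword_submultiset & Hab); rewrite subword_submultiset in Hab.
  exact (Hshort b Hb Hba (submultiset_strict Hba Hab)).
Qed.

Lemma minimal_factorization_below w X : factorization pmul pone w X ->
  exists m, minimal_factorization pmul pone m X /\ submultiset m w.
Proof.
  remember (length w) as n eqn:Hn; revert w Hn.
  induction n as [n IH] using lt_wf_ind; intros w -> Hw.
  destruct (classic (minimal_factorization pmul pone w X)) as [Hm|Hm].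
  - exists w; split; [exact Hm | apply submultiset_refl].
  - destruct (classic (exists b, factorization pmul pone b X /\
                        submultiset b w /\ length b < length w)) as [(b & Hb & Hbw & Hlen)|Hno].
    + destruct (IH _ Hlen b eq_refl Hb) as (m & Hm' & Hmb).
      exists m; split; [exact Hm' | eapply submultiset_trans; eauto].
    + exfalso; apply Hm, minimal_factorization_intro; [exact Hw|].
      intros b Hb Hbw Hlen; apply Hno; eauto.
Qed.

Lemma UmF_minimal_submultiset m w X : UmF pmul pone ->
  minimal_factorization pmul pone m X -> factorization pmul pone w X -> submultiset m w.
Proof.
  intros [_ Huniq] Hm Hw.
  destruct (minimal_factorization_below Hw) as (m' & Hm' & Hm'w).
  destruct (Huniq X m m' Hm Hm') as [Hmm' _].
  apply subword_submultiset in Hmm'.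
  eapply submultiset_trans; eauto.
Qed.

Lemma not_UmF_of_two_words us1 us2 T :
  Forall (fun u => u <> one) us1 -> Forall (fun u => u <> one) us2 ->
  subprods_are us1 T -> subprods_are us2 T ->
  (forall vs, incl vs us1 -> length vs < length us1 -> ~ subprods_are vs T) ->
  length us1 = length us2 -> ~ incl us2 us1 ->
  ~ UmF pmul pone.
Proof.
  intros Hne1 Hne2 HT1 HT2 Hshort Hlen Hincl U.
  set (X := word_prod pmul pone (map pair1 us1)).
  assert (HX2 : word_prod pmul pone (map pair1 us2) = X).
  { apply word_prod_pair1_eq; intro z; now rewrite (HT1 z), (HT2 z). }
  assert (Hmin : minimal_factorization pmul pone (map pair1 us1) X).
  { apply minimal_factorization_intro; [now apply factorization_pair1|].
    intros b [_ Hb] Hbw Hblen.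
    destruct (incl_map_inv _ _ (submultiset_incl Hbw)) as (vs & -> & Hvs).
    rewrite !length_map in Hblen.
    apply (Hshort vs Hvs Hblen); intro z.
    rewrite <- (HT1 z), <- !carrier_word_prod_pair1, Hb; reflexivity. }
  assert (Hfact2 : factorization pmul pone (map pair1 us2) X).
  { rewrite <- HX2; now apply factorization_pair1. }
  pose proof (UmF_minimal_submultiset U Hmin Hfact2) as Hsub.
  apply submultiset_length_eq in Hsub; [|now rewrite !length_map].
  apply Hincl; intros u Hu.
  assert (Hu1 : In (pair1 u) (map pair1 us1)).
  { apply (Permutation_in _ (Permutation_sym Hsub)), in_map, Hu. }
  apply in_map_iff in Hu1 as (v & Evu & Hv).
  rewrite Forall_forall in Hne2.
  now rewrite (pair1_inj (Hne2 u Hu) (eq_sym Evu)).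
Qed.

Lemma not_UmF_of_two_short_words us1 us2 T :
  Forall (fun u => u <> one) us1 -> Forall (fun u => u <> one) us2 ->
  subprods_are us1 T -> subprods_are us2 T ->
  NoDup T -> 2 ^ pred (length us1) < length T ->
  length us1 = length us2 -> ~ incl us2 us1 ->
  ~ UmF pmul pone.
Proof.
  intros Hne1 Hne2 HT1 HT2 HT Hbig.
  apply not_UmF_of_two_words with T; auto.
  intros vs _ Hlen Hvs.
  pose proof (subprods_are_length HT Hvs).
  assert (2 ^ length vs <= 2 ^ pred (length us1)) by (apply Nat.pow_le_mono_r; lia).
  lia.
Qed.

End Pfin1.

(* [norm] rewrites the goal to left-associated normal form, using as rewrite
   rules the hypotheses [u * v = s] of the context, also where [u * v] occurs
   as the junction [(p * u) * v]. *)
Ltac norm_step :=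
  first
    [ match goal with E : mmul _ ?u ?v = _ |- context [mmul _ ?u ?v] => rewrite E end
    | match goal with E : mmul _ ?v ?t = _ |- context [mmul _ (mmul _ ?u ?v) ?t] =>
        rewrite <- (massoc _ u v t), E end ].
Ltac norm :=
  rewrite ?mone_l, ?mone_r, ?massoc;
  repeat (norm_step; rewrite ?mone_l, ?mone_r, ?massoc).

Ltac solve_In := simpl; repeat (first [now left | right]).

Ltac solve_subprods_are :=
  let z := fresh "z" in let Hz := fresh "Hz" in
  intro z; simpl; split; intro Hz;
  repeat destruct Hz as [<-|Hz]; try contradiction; norm; solve_In.

Section AlmostBreakable.
Variable H : Monoid.
Hypothesis AB : almost_breakable H.
Local Notation "x * y" := (mmul H x y).
Local Notation one := (mone H).

Lemma mul_idem x : x * x = x.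
Proof. destruct (AB x x) as [[E|E]|[E|E]]; exact E. Qed.

Lemma mul_absorb_l {x y z} : x * y = z -> x * z = z.
Proof. intros <-; now rewrite massoc, mul_idem. Qed.

Lemma mul_absorb_r {x y z} : x * y = z -> z * y = z.
Proof. intros <-; now rewrite <- massoc, mul_idem. Qed.

Lemma unbalanced_neq_l x y : unbalanced H x y -> x * y <> x.
Proof. intros U E; apply U; now left. Qed.

Lemma unbalanced_neq_r x y : unbalanced H x y -> x * y <> y.
Proof. intros U E; apply U; now right. Qed.

Lemma unbalanced_distinct x y : unbalanced H x y -> x <> one /\ y <> one /\ x <> y.
Proof.
  intros U; split; [|split]; intros ->; apply U.
  - right; apply mone_l.
  - left; apply mone_r.
  - left; apply mul_idem.
Qed.

Lemma unbalanced_balanced_swap x y : unbalanced H x y -> balanced H y x.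
Proof. intros U; destruct (AB x y) as [B|B]; [contradiction | exact B]. Qed.

Lemma mul_neq_one x y : x <> one -> y <> one -> x * y <> one.
Proof.
  intros Hx Hy E; destruct (AB x y) as [[B|B]|[B|B]]; try congruence.
  - apply Hx; rewrite <- (mone_l H x), <- E, <- massoc, B; reflexivity.
  - apply Hy; rewrite <- (mone_r H y), <- E, massoc, B; reflexivity.
Qed.

Lemma mul_closed_pair u v : balanced H v u -> mul_closed [one; u; v; u * v].
Proof.
  pose proof (mul_idem u); pose proof (mul_idem v).
  intros Evu x y Hx Hy; simpl in Hx, Hy.
  destruct Evu; repeat destruct Hx as [<-|Hx]; try contradiction;
    repeat destruct Hy as [<-|Hy]; try contradiction; norm; solve_In.
Qed.

End AlmostBreakable.

Section Twisted.
Variable H : Monoid.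
Hypothesis AB : almost_breakable H.
Local Notation "x * y" := (mmul H x y).
Local Notation one := (mone H).
Local Notation pmul := (@Pfin1_mul H).
Local Notation pone := (Pfin1_one H).

Ltac two_triples us1 us2 T u :=
  apply (@not_UmF_of_two_short_words H us1 us2 T);
  [ repeat constructor; assumption | repeat constructor; assumption
  | solve_subprods_are | solve_subprods_are
  | repeat constructor; simpl; intuition congruence
  | simpl; lia | reflexivity
  | let Hi := fresh in intro Hi;
    assert (Hu : In u us1) by (apply Hi; simpl; intuition);
    simpl in Hu; intuition congruence ].

Lemma twisted_not_UmF_fst x y z w :
  unbalanced H x y -> unbalanced H z w -> x <> z -> x <> w -> y <> z -> y <> w ->
  x * y = z -> z * w = x -> ~ UmF pmul pone.
Proof.
  intros Uxy Uzw xz xw yz yw Exy Ezw.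
  destruct (unbalanced_distinct AB Uxy) as (x1 & y1 & xy).
  destruct (unbalanced_distinct AB Uzw) as (z1 & w1 & zw).
  pose proof (mul_idem AB x); pose proof (mul_idem AB y).
  pose proof (mul_idem AB z); pose proof (mul_idem AB w).
  pose proof (mul_absorb_l AB Exy) as Exz; pose proof (mul_absorb_r AB Exy) as Ezy.
  pose proof (mul_absorb_l AB Ezw) as Ezx; pose proof (mul_absorb_r AB Ezw) as Exw.
  assert (Eyx : y * x = x).
  { destruct (unbalanced_balanced_swap AB Uxy) as [E|E]; [exfalso|exact E].
    pose proof (massoc H x y x) as F; rewrite E, Exy, Ezx in F; congruence. }
  assert (Ewz : w * z = z).
  { destruct (unbalanced_balanced_swap AB Uzw) as [E|E]; [exfalso|exact E].
    pose proof (massoc H z w z) as F; rewrite E, Ezw, Exz in F; congruence. }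
  assert (Eyz : y * z = z).
  { pose proof (massoc H y x y) as F; rewrite Exy, Eyx, Exy in F; exact F. }
  assert (Ewx : w * x = x).
  { pose proof (massoc H w z w) as F; rewrite Ezw, Ewz, Ezw in F; exact F. }
  destruct (AB y w) as [[E|E]|[E|E]].
  - pose proof (massoc H x y w) as F; rewrite E, Exy, Ezw in F; congruence.
  - two_triples [x; y; w] [y; z; w] [one; x; y; z; w] z.
  - pose proof (massoc H z w y) as F; rewrite E, Ezw, Exy in F; congruence.
  - two_triples [w; x; y] [z; w; y] [one; x; y; z; w] z.
Qed.

Lemma twisted_not_UmF_snd x y z w :
  unbalanced H x y -> unbalanced H z w -> x <> z -> x <> w -> y <> z -> y <> w ->
  x * y = w -> z * w = y -> ~ UmF pmul pone.
Proof.
  intros Uxy Uzw xz xw yz yw Exy Ezw.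
  destruct (unbalanced_distinct AB Uxy) as (x1 & y1 & xy).
  destruct (unbalanced_distinct AB Uzw) as (z1 & w1 & zw).
  pose proof (mul_idem AB x); pose proof (mul_idem AB y).
  pose proof (mul_idem AB z); pose proof (mul_idem AB w).
  pose proof (mul_absorb_l AB Exy) as Exw; pose proof (mul_absorb_r AB Exy) as Ewy.
  pose proof (mul_absorb_l AB Ezw) as Ezy; pose proof (mul_absorb_r AB Ezw) as Eyw.
  assert (Eyx : y * x = y).
  { destruct (unbalanced_balanced_swap AB Uxy) as [E|E]; [exact E|exfalso].
    pose proof (massoc H y x y) as F; rewrite E, Exy, Eyw in F; congruence. }
  assert (Ewz : w * z = w).
  { destruct (unbalanced_balanced_swap AB Uzw) as [E|E]; [exact E|exfalso].
    pose proof (massoc H w z w) as F; rewrite E, Ezw, Ewy in F; congruence. }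
  assert (Eyz : y * z = y).
  { pose proof (massoc H z w z) as F; rewrite Ewz, Ezw in F; congruence. }
  assert (Ewx : w * x = w).
  { pose proof (massoc H x y x) as F; rewrite Eyx, Exy in F; congruence. }
  destruct (AB x z) as [[E|E]|[E|E]].
  - two_triples [x; z; y] [x; z; w] [one; x; y; z; w] w.
  - pose proof (massoc H x z w) as F; rewrite E, Ezw, Exy in F; congruence.
  - two_triples [z; x; y] [z; x; w] [one; x; y; z; w] w.
  - pose proof (massoc H z x y) as F; rewrite E, Exy, Ezw in F; congruence.
Qed.

Lemma twisted_not_UmF : twisted H -> ~ UmF pmul pone.
Proof.
  intros (x & y & z & w & Uxy & Uzw & (xz & xw & yz & yw) & Exy & Ezw).
  destruct Exy as [Exy|Exy], Ezw as [Ezw|Ezw].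
  - exact (twisted_not_UmF_fst Uxy Uzw xz xw yz yw Exy Ezw).
  - exfalso; apply yz.
    now rewrite <- (mul_absorb_l AB Ezw), (mul_absorb_r AB Exy).
  - exfalso; apply xw.
    now rewrite <- (mul_absorb_r AB Ezw), (mul_absorb_l AB Exy).
  - exact (twisted_not_UmF_snd Uxy Uzw xz xw yz yw Exy Ezw).
Qed.

End Twisted.

Section Bridged.
Variable H : Monoid.
Hypothesis AB : almost_breakable H.
Local Notation "x * y" := (mmul H x y).
Local Notation one := (mone H).
Local Notation pmul := (@Pfin1_mul H).
Local Notation pone := (Pfin1_one H).

Variables a b c : H.
Hypotheses (Uab : unbalanced H a b) (Ubc : unbalanced H b c) (Uac : unbalanced H a c).
Hypotheses (Nab : a * c <> a * b) (Nbc : a * c <> b * c).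

Local Notation T := [one; a; b; c; a * b; b * c].

Ltac NoDup_neqs ND :=
  repeat match type of ND with
  | NoDup (_ :: _) =>
      let Hn := fresh "Hn" in
      apply NoDup_cons_iff in ND as [Hn ND];
      repeat (let Hd := fresh "Hd" in apply not_in_cons in Hn as [Hd Hn])
  end.

Ltac bridge_cases :=
  pose proof (mul_idem AB a); pose proof (mul_idem AB b); pose proof (mul_idem AB c);
  destruct (unbalanced_balanced_swap AB Uab) as [Eba|Eba];
  destruct (unbalanced_balanced_swap AB Ubc) as [Ecb|Ecb];
  destruct (unbalanced_balanced_swap AB Uac) as [Eca|Eca].

(* Multiplying [ab = bc] by a suitable letter on a suitable side makes one
   side collapse to a letter. *)
Ltac refute_by_mul f E :=
  let F := fresh "F" in
  pose proof (f_equal f E) as F; cbv beta in F; revert E F; norm; intros E F; congruence.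

Lemma bridge_ab_neq_bc : a * b <> b * c.
Proof.
  pose proof (unbalanced_neq_l Uab); pose proof (unbalanced_neq_r Uab).
  pose proof (unbalanced_neq_l Ubc); pose proof (unbalanced_neq_r Ubc).
  intros E; bridge_cases;
    first [ refute_by_mul (mmul H b) E | refute_by_mul (fun t => t * b) E
          | refute_by_mul (mmul H c) E | refute_by_mul (fun t => t * a) E ].
Qed.

Lemma bridge_NoDup : NoDup (a * c :: T).
Proof.
  destruct (unbalanced_distinct AB Uab) as (a1 & b1 & ab).
  destruct (unbalanced_distinct AB Ubc) as (_ & c1 & bc).
  destruct (unbalanced_distinct AB Uac) as (_ & _ & ac).
  pose proof (unbalanced_neq_l Uab); pose proof (unbalanced_neq_r Uab).
  pose proof (unbalanced_neq_l Ubc); pose proof (unbalanced_neq_r Ubc).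
  pose proof (unbalanced_neq_l Uac); pose proof (unbalanced_neq_r Uac).
  pose proof (mul_neq_one AB a1 b1); pose proof (mul_neq_one AB b1 c1).
  pose proof (mul_neq_one AB a1 c1); pose proof bridge_ab_neq_bc.
  assert (a * c <> b) by (intros E; apply (unbalanced_neq_r Uab), (mul_absorb_l AB E)).
  assert (b * c <> a) by (intros E; apply (unbalanced_neq_l Uac), (mul_absorb_r AB E)).
  assert (a * b <> c) by (intros E; apply (unbalanced_neq_r Uac), (mul_absorb_l AB E)).
  repeat constructor; simpl; intuition congruence.
Qed.

Lemma bridge_words_subprods :
  subprods_are [b; c; a; b] T /\ subprods_are [b; c; a; a * b] T.
Proof. bridge_cases; split; solve_subprods_are. Qed.

Ltac refute_subprods_are e :=
  let HS := fresh "HS" in let Hin := fresh "Hin" in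
  intro HS; assert (Hin := proj2 (HS e) ltac:(solve_In));
  simpl in Hin; repeat destruct Hin as [Hin|Hin]; try contradiction;
  revert Hin; norm; intro Hin; congruence.

Lemma bridge_orders_not_subprods :
  ~ subprods_are [c; a; b] T /\ ~ subprods_are [c; b; a] T /\ ~ subprods_are [b; c; a] T.
Proof.
  pose proof bridge_NoDup as ND; NoDup_neqs ND.
  bridge_cases; repeat split;
    first [refute_subprods_are (b * c) | refute_subprods_are (a * b)].
Qed.

Lemma bridge_minimal vs : incl vs [b; c; a; b] -> length vs < 4 -> ~ subprods_are vs T.
Proof.
  intros Hincl Hlen Hvs.
  pose proof bridge_NoDup as ND; NoDup_neqs ND.
  assert (Hletter : forall u S, mul_closed S -> In one S -> In u T -> ~ In u S ->
                    incl [b; c; a; b] (u :: S) -> In u vs).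
  { intros u S HS H1 HuT HuS HS'.
    apply (subprods_are_letter HS H1 Hvs HuT HuS), (incl_tran Hincl HS'). }
  pose proof (mul_closed_pair AB (unbalanced_balanced_swap AB Ubc)) as Sbc.
  pose proof (mul_closed_pair AB (unbalanced_balanced_swap AB Uab)) as Sab.
  pose proof (mul_closed_pair AB (unbalanced_balanced_swap AB Uac)) as Sac.
  assert (Habc : In a vs /\ In b vs /\ In c vs).
  { split; [|split];
      [apply (Hletter a _ Sbc) | apply (Hletter b _ Sac) | apply (Hletter c _ Sab)];
      solve [solve_In | simpl; intuition congruence | intros v Hv; simpl in *; tauto]. }
  assert (Hperm : Permutation [a; b; c] vs).
  { apply NoDup_Permutation_bis; [repeat constructor; simpl; intuition congruence | simpl; lia |].
    intros v [<-|[<-|[<-|[]]]]; tauto. }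
  destruct bridge_orders_not_subprods as (Ncab & Ncba & Nbca).
  (* when [a] precedes [c], the word has the subproduct [ac], which is not in [T] *)
  apply Permutation_length_3_inv in Hperm as [-> | [-> | [-> | [-> | [-> | ->]]]]];
    try contradiction;
    assert (Hac := proj1 (Hvs (a * c)) ltac:(simpl; norm; solve_In));
    simpl in Hac; intuition congruence.
Qed.

Lemma bridged_not_UmF : ~ UmF pmul pone.
Proof.
  pose proof bridge_NoDup as ND; NoDup_neqs ND.
  destruct bridge_words_subprods as [Hw1 Hw2].
  apply (not_UmF_of_two_words (us1 := [b; c; a; b]) (us2 := [b; c; a; a * b]) (T := T));
    [ repeat constructor; congruence | repeat constructor; congruence
    | exact Hw1 | exact Hw2 | exact bridge_minimal | reflexivity |].
  intros Hi; assert (Hab : In (a * b) [b; c; a; b]) by (apply Hi; solve_In).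
  simpl in Hab; intuition congruence.
Qed.

End Bridged.

Unset Implicit Arguments.

Theorem proposition4p5 (H : Monoid) :
  almost_breakable H -> (twisted H \/ bridged H) ->
  ~ UmF (@Pfin1_mul H) (Pfin1_one H).
Proof.
  intros AB [Htw | (a & b & c & Uab & Ubc & Uac & Nab & Nbc)].
  - exact (twisted_not_UmF AB Htw).
  - exact (bridged_not_UmF AB Uab Ubc Uac Nab Nbc).
Qed.
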